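(* Let $N$ be a finite set with $|N|\ge 2$. There is a one-to-one correspondence between SE faces of $P_N$ and faces of $C_N$ which preserves inclusion: for SE faces $F_1,F_2$ of $P_N$ with corresponding faces $\bar F_1,\bar F_2$ of $C_N$, $F_1\subseteq F_2$ iff $\bar F_1\subseteq\bar F_2$. Specifically, the SE face of $P_N$ given by a valid inequality $\langle o,\eta\rangle\le u$ with SE objective $o$ corresponds to the face of $C_N$ given by the (valid) inequality $\langle\tau_o,c\rangle\le u$, and the sets of graphs identified with corresponding faces coincide: $\{G\in\mathrm{DAG}(N):\eta_G\in F\}=\{G\in\mathrm{DAG}(N):c_G\in\bar F\}$.
   Context: $\mathrm{DAG}(N)$ is the set of acyclic directed graphs over $N$; $\mathrm{pa}_G(a)$ is the parent set of $a$ in $G$; $G\sim H$ (Markov equivalence) means same adjacencies and same immoralities (induced $a\to c\leftarrow b$, $a,b$ non-adjacent). $\Upsilon=\{(a|B): a\in N,\ \emptyset\neq B\subseteq N\setminus\{a\}\}$; $\eta_G\in\mathbb{R}^{\Upsilon}$ has $\eta_G(a|B)=1$ if $B=\mathrm{pa}_G(a)$, else $0$; $P_N=\mathrm{conv}\{\eta_G:G\in\mathrm{DAG}(N)\}$. $\mathcal{S}=\{S\subseteq N:|S|\ge2\}$; $c_\eta(S)=\sum_{a\in S}\sum_{B:\,S\setminus\{a\}\subseteq B\subseteq N\setminus\{a\}}\eta(a|B)$; $c_G=c_{\eta_G}$; $C_N=\mathrm{conv}\{c_G:G\in\mathrm{DAG}(N)\}$ is the characteristic-imset polytope. $o$ is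 an SE objective if $\langle o,\eta_G\rangle=\langle o,\eta_H\rangle$ whenever $G\sim H$; a face $F$ of $P_N$ is SE if $F=\{v\in P_N:\langle o,v\rangle=u\}$ for some SE objective $o$ and $u$ with $\langle o,v\rangle\le u$ on $P_N$. For an SE objective $o$, $\tau_o\in\mathbb{R}^{\mathcal{S}}$ is $\tau_o(T)=\sum_{\emptyset\neq K\subseteq T\setminus\{b\}}(-1)^{|T\setminus\{b\}|-|K|}o(b|K)$ for any $b\in T$ (independent of $b$), with $o(b|\emptyset)=0$. *)

From HB Require Import structures.
From mathcomp Require Import all_boot all_order all_algebra.
From mathcomp Require Import classical_sets reals.
From mathcomp Require Import finset.
Set Implicit Arguments. Unset Strict Implicit. Unset Printing Implicit Defensive.
Import Order.TTheory GRing.Theory Num.Theory.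
Local Open Scope ring_scope.

Section Defs.
Variable N : finType.

(* Directed graphs over N: sets of arrows (a,b) meaning a -> b. *)
Definition arrows := {set N * N}.
Definition arrel (G : arrows) : rel N := fun a b => (a, b) \in G.
(* acyclic: no directed cycle (including self-loops) *)
Definition is_dag (G : arrows) : bool :=
  [forall p in G, ~~ connect (arrel G) p.2 p.1].
Definition pa (G : arrows) (a : N) : {set N} := [set b | (b, a) \in G].

Definition adj (G : arrows) (a b : N) : bool := ((a, b) \in G) || ((b, a) \in G).
Definition immorality (G : arrows) (a c b : N) : bool :=
  [&& a != b, (a, c) \in G, (b, c) \in G & ~~ adj G a b].
Definition markov_equiv (G H : arrows) : Prop :=
  (forall a b, adj G a b = adj H a b) /\
  (forall a c b, immorality G a c b = immorality H a c b).

Definition upsP : pred (N * {set N}) := fun p => (p.2 != set0) && (p.1 \notin p.2).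
Local Notation Ups := {p : N * {set N} | upsP p}.
Definition SSP : pred {set N} := fun S => (1 < #|S|)%N.
Local Notation SS := {S : {set N} | SSP S}.

Variable R : realType.

(* value of a vector on (a|B), with 0 outside Upsilon (e.g. o(b|emptyset) = 0) *)
Definition look (f : {ffun Ups -> R}) (a : N) (B : {set N}) : R :=
  match (insub (a, B) : option Ups) with Some x => f x | None => 0 end.

Definition eta (G : arrows) : {ffun Ups -> R} :=
  [ffun x : Ups => ((val x).2 == pa G (val x).1)%:R].

Definition cvec (e : {ffun Ups -> R}) : {ffun SS -> R} :=
  [ffun S : SS => \sum_(a in val S)
       \sum_(B : {set N} | (val S :\ a \subset B) && (a \notin B)) look e a B].

Definition cG (G : arrows) : {ffun SS -> R} := cvec (eta G).

Definition inner (I : finType) (o v : {ffun I -> R}) : R := \sum_(i : I) o i * v i.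

Definition conv_dags (I : finType) (pt : arrows -> {ffun I -> R}) : set {ffun I -> R} :=
  fun v => exists lam : arrows -> R,
    [/\ forall G, 0 <= lam G,
        \sum_(G : arrows | is_dag G) lam G = 1 &
        forall i, v i = \sum_(G : arrows | is_dag G) lam G * pt G i].

Definition PN : set {ffun Ups -> R} := conv_dags eta.
Definition CN : set {ffun SS -> R} := conv_dags cG.

Definition valid (I : finType) (P : set {ffun I -> R}) (o : {ffun I -> R}) (u : R) : Prop :=
  forall v, P v -> inner o v <= u.
Definition face_of (I : finType) (P : set {ffun I -> R}) (o : {ffun I -> R}) (u : R)
  : set {ffun I -> R} := fun v => P v /\ inner o v = u.
Definition is_face (I : finType) (P : set {ffun I -> R}) (F : set {ffun I -> R}) : Prop :=
  exists o u, valid P o u /\ F = face_of P o u.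

Definition SE_objective (o : {ffun Ups -> R}) : Prop :=
  forall G H, is_dag G -> is_dag H -> markov_equiv G H -> inner o (eta G) = inner o (eta H).
Definition SE_face (F : set {ffun Ups -> R}) : Prop :=
  exists o u, [/\ SE_objective o, valid PN o u & F = face_of PN o u].

(* tau_o(T) computed with b := some chosen element of T *)
Definition tau_at (o : {ffun Ups -> R}) (T : {set N}) : R :=
  if [pick b in T] is Some b then
     \sum_(K : {set N} | (K != set0) && (K \subset T :\ b))
        (-1) ^+ (#|T :\ b| - #|K|)%N * look o b K
  else 0.
Definition tau (o : {ffun Ups -> R}) : {ffun SS -> R} :=
  [ffun T : SS => tau_at o (val T)].
End Defs.
Notation Ups N := {p : N * {set N} | @upsP N p}.
Notation SS N := {S : {set N} | @SSP N S}.

(* For an SE objective o and every DAG G, <o, eta_G> = <tau_o, c_G>.  Indeed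
   <o, eta_G> = sum_a o(a | pa_G(a)); Moebius inversion over the subsets of
   pa_G(a) rewrites each term as sum_(L <= pa_G(a)) tau_o(a + L), and regrouping by
   T = a + L yields <tau_o, c_G> since c_G(T) = sum_(a in T) [T \ a <= pa_G(a)].
   Standard equivalence is used only to show that tau_o(T) does not depend on the
   element b of T used to compute it.  Conversely, any objective w on C_N pulls back
   to the SE objective o(a|B) = sum_(L <= B) w(a + L) with <o, eta_G> = <w, c_G>.
   Faces of a convex hull are determined by the vertices they contain, so these two
   identities transport faces, their inclusions and their vertex sets between
   P_N and C_N. *)
From Pilot Require Import Defs.
From HB Require Import structures.
From mathcomp Require Import all_boot all_order all_algebra.
From mathcomp Require Import classical_sets reals.
From mathcomp Require Import finset.
From mathcomp Require Import lra.
Import Order.TTheory GRing.Theory Num.Theory.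
Local Open Scope ring_scope.

Set Implicit Arguments. Unset Strict Implicit. Unset Printing Implicit Defensive.

Lemma big_sig_val (R : Type) (idx : R) (op : Monoid.com_law idx)
    (T : finType) (P : pred T) (F : T -> R) :
  \big[op/idx]_(x : {x | P x}) F (val x) = \big[op/idx]_(t | P t) F t.
Proof.
rewrite (reindex_omap (val : {x | P x} -> T) insub); last first.
  by move=> i Pi; rewrite insubT.
apply: eq_bigl => -[i iP] /=; rewrite iP insubT /=.
by apply/esym/eqP; congr Some; apply: val_inj; rewrite /= SubK.
Qed.

Section SubsetMoebius.
Variables (N : finType) (R : pzRingType).
Implicit Types (g h : {set N} -> R) (K L P : {set N}).

Lemma sum_setU1 (a : N) (Q : pred {set N}) (F : {set N} -> R) :
  \sum_(T : {set N} | Q T && (a \in T)) F T = \sum_(L : {set N} | Q (a |: L) && (a \notin L)) F (a |: L).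
Proof.
rewrite (reindex_onto (fun L => a |: L) (fun T => T :\ a)); last first.
  by move=> T /andP[_ aT]; rewrite setD1K.
apply: eq_bigl => L; rewrite setU11 andbT; congr (_ && _).
case aL: (a \in L) => /=; last by rewrite setU1K ?aL ?eqxx.
by apply/negbTE/eqP => /setP/(_ a); rewrite !inE eqxx aL.
Qed.

Lemma sum_subsets_split (c : N) P (f : {set N} -> R) : c \in P ->
  \sum_(K : {set N} | K \subset P) f K = \sum_(J : {set N} | J \subset P :\ c) (f J + f (c |: J)).
Proof.
move=> cP; rewrite big_split /= addrC (bigID (fun K : {set N} => c \in K)) /=; congr (_ + _).
  rewrite sum_setU1; apply: eq_bigl => J.
  by rewrite subUset sub1set cP /= subsetD1.
by apply: eq_bigl => J; rewrite subsetD1.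
Qed.

Definition moebius g L : R :=
  \sum_(K : {set N} | K \subset L) (-1) ^+ (#|L| - #|K|) * g K.

Lemma eq_moebius g h L :
  (forall K, K \subset L -> g K = h K) -> moebius g L = moebius h L.
Proof. by move=> e; apply: eq_bigr => K KL; rewrite e. Qed.

Lemma moebiusB g h L : moebius (fun K => g K - h K) L = moebius g L - moebius h L.
Proof. by rewrite /moebius -sumrB; apply: eq_bigr => K _; rewrite mulrBr. Qed.

Lemma moebius_set0 g : moebius g set0 = g set0.
Proof.
rewrite /moebius (eq_bigl (pred1 set0)) => [|L]; last by rewrite subset0.
by rewrite big_pred1_eq cards0 expr0 mul1r.
Qed.

Lemma moebius_setU1 g (d : N) L : d \notin L ->
  moebius g (d |: L) = moebius (fun K => g (d |: K)) L - moebius g L.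
Proof.
move=> dL; rewrite /moebius (sum_subsets_split _ (setU11 d L)) setU1K //.
rewrite big_split /= addrC -sumrN; congr (_ + _); apply: eq_bigr => J JL;
  have dJ : d \notin J by apply: contra dL => /(fintype.subsetP JL).
  by rewrite !cardsU1 dL dJ !add1n subSS.
by rewrite cardsU1 dL add1n subSn ?subset_leq_card // exprS mulN1r mulNr.
Qed.

Lemma sum_moebius g P : \sum_(L : {set N} | L \subset P) moebius g L = g P.
Proof.
elim: {P}_.+1 {-2}P (ltnSn #|P|) g => // n IH P; rewrite ltnS => leP g.
have [->|[d dP]] := set_0Vmem P.
  by rewrite (eq_bigl (pred1 set0)) => [|L]; rewrite ?big_pred1_eq ?moebius_set0 ?subset0.
rewrite (sum_subsets_split _ dP).
transitivity (\sum_(L : {set N} | L \subset P :\ d) moebius (fun K => g (d |: K)) L).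
  apply: eq_bigr => L LP; rewrite moebius_setU1; first by rewrite addrC subrK.
  by apply: contraTN LP => dL; rewrite subsetD1 dL andbF.
by rewrite IH ?setD1K //; move: leP; rewrite (cardsD1 d P) dP.
Qed.

End SubsetMoebius.

Section ConvexHullOfDags.
Local Open Scope classical_set_scope.
Variables (N : finType) (R : realType) (I : finType).
Variable pt : arrows N -> {ffun I -> R}.
Implicit Types (w v : {ffun I -> R}) (u : R) (lam : arrows N -> R).

Lemma inner_conv w v lam :
  (forall i, v i = \sum_(G | is_dag G) lam G * pt G i) ->
  inner w v = \sum_(G | is_dag G) lam G * inner w (pt G).
Proof.
move=> hv; rewrite /inner (eq_bigr (fun i => \sum_(G | is_dag G) lam G * (w i * pt G i))).
  by rewrite exchange_big /=; apply: eq_bigr => G _; rewrite mulr_sumr.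
by move=> i _; rewrite hv mulr_sumr; apply: eq_bigr => G _; rewrite mulrCA.
Qed.

Lemma conv_dags_vertex G : is_dag G -> conv_dags pt (pt G).
Proof.
move=> dG; exists (fun H => (H == G)%:R); split => [H||i]; first by rewrite ler0n.
  by rewrite (bigD1 G) //= eqxx big1 ?addr0 // => H /andP[_ /negbTE ->].
rewrite (bigD1 G) //= eqxx mul1r big1 ?addr0 // => H /andP[_ /negbTE ->].
by rewrite mul0r.
Qed.

Lemma valid_vertex w u G : valid (conv_dags pt) w u -> is_dag G -> inner w (pt G) <= u.
Proof. by move=> h dG; apply/h/conv_dags_vertex. Qed.

Lemma valid_vertices w u :
  (forall G, is_dag G -> inner w (pt G) <= u) -> valid (conv_dags pt) w u.
Proof.
move=> h v [lam [l0 l1 hv]]; rewrite (inner_conv w hv).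
rewrite -[u]mul1r -l1 mulr_suml.
by apply: ler_sum => G dG; apply/ler_wpM2l/h.
Qed.

Lemma inner_conv_eq w v u lam :
  valid (conv_dags pt) w u -> (forall G, 0 <= lam G) ->
  \sum_(G | is_dag G) lam G = 1 ->
  (forall i, v i = \sum_(G | is_dag G) lam G * pt G i) ->
  inner w v = u <-> forall G, is_dag G -> lam G != 0 -> inner w (pt G) = u.
Proof.
move=> hval l0 l1 hv.
have slack : u - inner w v = \sum_(G | is_dag G) lam G * (u - inner w (pt G)).
  rewrite (inner_conv w hv) -[u in LHS]mul1r -l1 mulr_suml -sumrB.
  by apply: eq_bigr => G _; rewrite mulrBr.
have slack_ge0 G : is_dag G -> 0 <= lam G * (u - inner w (pt G)).
  by move=> dG; rewrite mulr_ge0 // subr_ge0; apply: valid_vertex.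
split => [e G dG lG|h].
  move: slack; rewrite e subrr => /esym/(psumr_eq0P slack_ge0)/(_ G dG)/eqP.
  by rewrite mulf_eq0 (negbTE lG) subr_eq0 => /eqP.
apply/eqP; rewrite eq_sym -subr_eq0 slack big1 // => G dG.
by have [->|lG] := eqVneq (lam G) 0; rewrite ?mul0r // h // subrr mulr0.
Qed.

Lemma face_subset w1 w2 u1 u2 :
  valid (conv_dags pt) w1 u1 -> valid (conv_dags pt) w2 u2 ->
  face_of (conv_dags pt) w1 u1 `<=` face_of (conv_dags pt) w2 u2 <->
  forall G, is_dag G -> inner w1 (pt G) = u1 -> inner w2 (pt G) = u2.
Proof.
move=> v1 v2; split => [h G dG e|h v [[lam [l0 l1 hv]] e]].
  by have [] := h (pt G) (conj (conv_dags_vertex dG) e).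
split; first by exists lam.
apply/(inner_conv_eq v2 l0 l1 hv) => G dG lG; apply: h => //.
by move/(inner_conv_eq v1 l0 l1 hv): e; apply.
Qed.

Lemma eq_inner_conv w1 w2 v :
  (forall G, is_dag G -> inner w1 (pt G) = inner w2 (pt G)) ->
  conv_dags pt v -> inner w1 v = inner w2 v.
Proof.
move=> h [lam [_ _ hv]]; rewrite (inner_conv w1 hv) (inner_conv w2 hv).
by apply: eq_bigr => G dG; rewrite h.
Qed.

End ConvexHullOfDags.

Section Dags.
Variable N : finType.
Implicit Types (G H : arrows N) (T J : {set N}).

Lemma dag_edge G x y : is_dag G -> (x, y) \in G -> ~~ connect (arrel G) y x.
Proof. by move=> /forall_inP; apply. Qed.

Lemma dag_asym G x y : is_dag G -> (x, y) \in G -> (y, x) \notin G.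
Proof. by move=> dG /(dag_edge dG); apply: contraNN => yx; apply: connect1. Qed.

Lemma notin_pa G a : is_dag G -> a \notin pa G a.
Proof. by move=> dG; rewrite inE; apply/negP => /[dup] /(dag_asym dG) /negP. Qed.

Lemma connect_closed G (A : {set N}) x y :
  (forall u v, u \in A -> (u, v) \in G -> v \in A) ->
  x \in A -> connect (arrel G) x y -> y \in A.
Proof.
move=> clA + /connectP [p pth ->].
by elim: p x pth => //= z p IH x /andP[xz pth] xA; apply/IH/(clA x).
Qed.

Lemma dag_sink H T : is_dag H -> T != set0 ->
  exists2 s, s \in T & forall t, t \in T -> (s, t) \notin H.
Proof.
move=> dH /set0Pn [t0 t0T].
pose reach s := [set y | connect (arrel H) s y].
have [s sT smin] := arg_minnP (fun s => #|reach s|) t0T.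
exists s => // t tT; apply/negP => st.
have := smin t tT; apply/negP; rewrite -ltnNge; apply: proper_card.
apply/properP; split.
  apply/fintype.subsetP => y; rewrite !inE => ty.
  exact/connect_trans/ty/connect1.
by exists s; rewrite inE ?connect0 ?(dag_edge dH st).
Qed.

Definition has_common_child G T := [exists a in T, T :\ a \subset pa G a].

Lemma markov_equiv_sym G H : markov_equiv G H -> markov_equiv H G.
Proof. by move=> [h1 h2]; split=> *; rewrite ?h1 ?h2. Qed.

(* A sink s of T in H is a common child of T in H as well: an arrow s -> x would
   contradict sinkness, and a missing adjacency x - s would create an immorality
   x -> a <- s in G that H lacks. *)
Lemma has_common_child_markov G H T : markov_equiv G H -> is_dag H ->
  has_common_child G T -> has_common_child H T.
Proof.
move=> [hadj himm] dH /exists_inP [a aT sa]; apply/exists_inP.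
have [|s sT sink] := dag_sink (T := T) dH; first by apply/set0Pn; exists a.
have GxA y : y \in T -> y != a -> (y, a) \in G.
  move=> yT ya; have /(fintype.subsetP sa) : y \in T :\ a by rewrite !inE ya yT.
  by rewrite inE.
have adjH_sink y : y \in T -> adj H y s = ((y, s) \in H).
  by move=> yT; rewrite /adj (negbTE (sink y yT)) orbF.
exists s => //; apply/fintype.subsetP => x /setD1P [xs xT]; rewrite inE.
have [eas|sa'] := eqVneq a s; first by subst a; rewrite -adjH_sink // -hadj /adj GxA.
have [->|xa] := eqVneq x a; first by rewrite -adjH_sink // -hadj /adj GxA ?orbT // eq_sym.
case adjxs: (adj G x s); first by rewrite -adjH_sink // -hadj.
have : immorality G x a s by rewrite /immorality xs !GxA // 1?eq_sym // adjxs.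
by rewrite himm => /and4P [_ _ /(negP (sink a aT))].
Qed.

Section ArrowOver.
Variables (b c : N) (J : {set N}).
Hypotheses (bc : b != c) (bJ : b \notin J) (cJ : c \notin J).

Definition arrow_over : arrows N :=
  [set p | ((p.1 \in J) && ((p.2 == b) || (p.2 == c))) || (p == (b, c))].

Lemma arrow_overE x y : ((x, y) \in arrow_over) =
  ((x \in J) && ((y == b) || (y == c))) || ((x == b) && (y == c)).
Proof. by rewrite inE xpair_eqE. Qed.

Lemma pa_arrow_over x :
  pa arrow_over x = if x == b then J else if x == c then b |: J else set0.
Proof.
apply/setP => y; rewrite inE arrow_overE.
have [->|xb] := eqVneq x b; first by rewrite (negbTE bc) andbF orbF andbT.
have [_|xc] := eqVneq x c; first by rewrite !inE !andbT orbC.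
by rewrite /= !andbF inE.
Qed.

Lemma dag_arrow_over : is_dag arrow_over.
Proof.
have notJ z : z \in [set b; c] -> z \notin J by rewrite !inE => /orP[]/eqP->.
have closed_bc u v : u \in [set b; c] -> (u, v) \in arrow_over -> v \in [set b; c].
  by move=> /notJ /negbTE uJ; rewrite arrow_overE uJ /= => /andP[_ /eqP->]; rewrite !inE eqxx orbT.
have closed_c u v : u \in [set c] -> (u, v) \in arrow_over -> v \in [set c].
  by move=> /set1P->; rewrite arrow_overE (negbTE cJ) (eq_sym c b) (negbTE bc).
apply/forall_inP => -[x y]; rewrite arrow_overE /=.
case/orP => [/andP[xJ ybc]|/andP[/eqP-> /eqP->]]; apply/negP => /connect_closed reach.
  by move: xJ; apply/negP/notJ/reach; rewrite ?inE.
by have /set1P/eqP := reach _ closed_c (set11 c); rewrite (negbTE bc).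
Qed.

End ArrowOver.

Lemma adj_arrow_over b c J x y : adj (arrow_over b c J) x y = adj (arrow_over c b J) x y.
Proof.
rewrite /adj !arrow_overE.
by case: (x == b); case: (x == c); case: (y == b); case: (y == c); case: (x \in J); case: (y \in J).
Qed.

Lemma immorality_arrow_over b c J x z y : b != c -> b \notin J -> c \notin J ->
  immorality (arrow_over b c J) x z y =
  [&& x != y, x \in J, y \in J & (z == b) || (z == c)].
Proof.
move=> bc bJ cJ; rewrite /immorality /adj !arrow_overE.
have neqJ u v : u \in J -> v \notin J -> (u == v) = false.
  by move=> uJ; apply: contraNF => /eqP <-.
have [xJ|xJ] := boolP (x \in J); have [yJ|yJ] := boolP (y \in J).
- by rewrite (neqJ x b) ?(neqJ x c) ?(neqJ y b) ?(neqJ y c) //= !orbF andbT andbb.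
- rewrite (neqJ x b) ?(neqJ x c) //=.
  by case: (y == b); rewrite /= ?andbF.
- rewrite (neqJ y b) ?(neqJ y c) //=.
  by case: (x == b); rewrite /= ?andbF ?orbT.
rewrite /= andbF; apply/negbTE/and4P => -[xy /andP[/eqP xb _] /andP[/eqP yb _] _].
by rewrite xb yb eqxx in xy.
Qed.

Lemma markov_equiv_arrow_over b c J : b != c -> b \notin J -> c \notin J ->
  markov_equiv (arrow_over b c J) (arrow_over c b J).
Proof.
move=> bc bJ cJ; split=> [|x z y]; first exact: adj_arrow_over.
by rewrite !immorality_arrow_over 1?(eq_sym c) // [(z == c) || _]orbC.
Qed.

End Dags.

Section Imsets.
Variables (N : finType) (R : realType).
Local Notation eta := (@Defs.eta N R).
Local Notation cG := (@cG N R).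
Implicit Types (G H : arrows N) (o : {ffun Ups N -> R}) (w : {ffun SS N -> R}).

Lemma look_set0 o a : look o a set0 = 0.
Proof. by rewrite /look insubF // /upsP /= eqxx. Qed.

Lemma look_eta G a B : look (eta G) a B = (upsP (a, B) && (B == pa G a))%:R.
Proof. by rewrite /look; case: insubP => [x -> vx|/negbTE ->]; rewrite ?ffunE ?vx. Qed.

Lemma look_sum o a B : look o a B = \sum_(x : Ups N) o x * (val x == (a, B))%:R.
Proof.
rewrite /look; case: insubP => [x _ vx|nB].
  rewrite (bigD1 x) //= vx eqxx mulr1 big1 ?addr0 // => y yx.
  by rewrite -vx val_eqE (negbTE yx) mulr0.
rewrite big1 // => x _; case: eqP => [vx|]; last by rewrite mulr0.
by move: (valP x); rewrite vx (negbTE nB).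
Qed.

Lemma inner_eta o G : inner o (eta G) = \sum_a look o a (pa G a).
Proof.
under [RHS]eq_bigr do rewrite look_sum.
rewrite exchange_big; apply: eq_bigr => x _; rewrite -mulr_sumr ffunE; congr (_ * _).
rewrite (bigD1 (val x).1) //= big1 ?addr0 => [|a ax].
  by case: (val x) => a B; rewrite xpair_eqE eqxx.
by case: eqP => // vx; rewrite vx eqxx in ax.
Qed.

Lemma cG_sum G (T : SS N) : is_dag G ->
  cG G T = \sum_(a in val T) (val T :\ a \subset pa G a)%:R.
Proof.
move=> dG; rewrite /cG /cvec ffunE; apply: eq_bigr => a aT.
rewrite big_mkcond (bigD1 (pa G a)) //= big1 ?addr0 => [|B /negbTE BP]; last first.
  by rewrite look_eta BP andbF; case: ifP.
rewrite notin_pa // andbT look_eta eqxx andbT /upsP /= notin_pa // andbT.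
case: ifP => // sub; suff -> : pa G a != set0 by [].
have : (0 < #|val T :\ a|)%N by move: (valP T); rewrite /SSP (cardsD1 a) aT.
by rewrite card_gt0 => /set0Pn [x /(fintype.subsetP sub) xpa]; apply/set0Pn; exists x.
Qed.

(* In a DAG at most one vertex of T can have all other vertices of T as parents. *)
Lemma cG_has_common_child G (T : SS N) : is_dag G ->
  cG G T = (has_common_child G (val T))%:R.
Proof.
move=> dG; rewrite cG_sum //.
case: (boolP (has_common_child G (val T))) => [/exists_inP [a aT sa]|hcc]; last first.
  rewrite big1 // => a aT; apply/eqP; rewrite pnatr_eq0 eqb0.
  by apply: contra hcc => sa; apply/exists_inP; exists a.
rewrite (bigD1 a) //= sa big1 ?addr0 // => b /andP[bT ba].
apply/eqP; rewrite pnatr_eq0 eqb0; apply: contraTN isT => sb.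
have parent x y : x \in val T -> x != y -> val T :\ y \subset pa G y -> (x, y) \in G.
  by move=> xT xy /fintype.subsetP/(_ x); rewrite !inE xy xT; apply.
have ab : (a, b) \in G by apply: parent; rewrite // eq_sym.
by move: (dag_asym dG ab); rewrite parent.
Qed.

Lemma cG_markov G H : is_dag G -> is_dag H -> markov_equiv G H -> cG G = cG H.
Proof.
move=> dG dH m; apply/ffunP => T; rewrite !cG_has_common_child //.
suff -> : has_common_child G (val T) = has_common_child H (val T) by [].
by apply/idP/idP; apply: has_common_child_markov => //; apply: markov_equiv_sym.
Qed.

Lemma notin_sub_pa G a (L : {set N}) : is_dag G -> L \subset pa G a -> a \notin L.
Proof. by move=> dG LP; apply: contraNN (notin_pa a dG) => /(fintype.subsetP LP). Qed.

Definition lookS w (S : {set N}) : R := if insub S is Some T then w T else 0.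

Lemma lookS_val w (T : SS N) : lookS w (val T) = w T.
Proof. by rewrite /lookS valK. Qed.

Lemma lookS_set1 w a : lookS w [set a] = 0.
Proof. by rewrite /lookS insubF // /SSP cards1. Qed.

Lemma sum_SS_setD1 (F : N -> {set N} -> R) :
  \sum_(T : SS N) \sum_(a in val T) F a (val T :\ a) =
  \sum_a \sum_(L : {set N} | (L != set0) && (a \notin L)) F a L.
Proof.
rewrite (big_sig_val _ (@SSP N) (fun T : {set N} => \sum_(a in T) F a (T :\ a))).
rewrite (exchange_big_dep predT) //=; apply: eq_bigr => a _.
rewrite sum_setU1; apply: eq_big => [L|L /andP[_ aL]]; last by rewrite setU1K.
by rewrite /SSP cardsU1; case: (a \in L); rewrite /= ?andbF // add1n ltnS card_gt0.
Qed.

Lemma inner_cG w G : is_dag G ->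
  inner w (cG G) = \sum_a \sum_(L : {set N} | L \subset pa G a) lookS w (a |: L).
Proof.
move=> dG; rewrite /inner.
transitivity (\sum_(T : SS N) \sum_(a in val T)
    lookS w (a |: (val T :\ a)) * (val T :\ a \subset pa G a)%:R).
  apply: eq_bigr => T _; rewrite cG_sum // mulr_sumr.
  by apply: eq_bigr => a aT; rewrite setD1K // lookS_val.
rewrite (sum_SS_setD1 (fun a L => lookS w (a |: L) * (L \subset pa G a)%:R)).
apply: eq_bigr => a _.
rewrite big_mkcond [RHS]big_mkcond; apply: eq_bigr => L _ /=.
have [LP|_] := boolP (L \subset pa G a); rewrite ?mulr0 ?if_same // mulr1.
rewrite (notin_sub_pa dG LP) andbT.
by have [->|] := eqVneq L set0; rewrite ?setU0 ?lookS_set1.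
Qed.

Lemma inner_eta_arrow_over o b c (J : {set N}) : b != c -> b \notin J -> c \notin J ->
  inner o (eta (arrow_over b c J)) = look o b J + look o c (b |: J).
Proof.
move=> bc bJ cJ; rewrite inner_eta (bigD1 b) //= (bigD1 c) 1?eq_sym //=.
rewrite !pa_arrow_over // eqxx [c == b]eq_sym (negbTE bc) eqxx big1 ?addr0 // => x /andP[xb xc].
by rewrite pa_arrow_over // (negbTE xb) (negbTE xc) look_set0.
Qed.

(* Reversing the arrow b -> c under the common parents J preserves Markov equivalence. *)
Lemma SE_look_swap o b c (J : {set N}) : SE_objective o -> b != c -> b \notin J -> c \notin J ->
  look o b J + look o c (b |: J) = look o c J + look o b (c |: J).
Proof.
move=> SEo bc bJ cJ; have cb : c != b by rewrite eq_sym.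
rewrite -!inner_eta_arrow_over //.
exact: SEo (dag_arrow_over bc bJ cJ) (dag_arrow_over cb cJ bJ) (markov_equiv_arrow_over bc bJ cJ).
Qed.

Lemma moebius_look_indep o (T : {set N}) b c : SE_objective o -> b \in T -> c \in T ->
  moebius (look o b) (T :\ b) = moebius (look o c) (T :\ c).
Proof.
move=> SEo bT cT; have [<-//|bc] := eqVneq b c.
set D := T :\ b :\ c.
have cD : c \notin D by rewrite !inE eqxx.
have bD : b \notin D by rewrite !inE eqxx andbF.
have -> : T :\ b = c |: D by rewrite setD1K // !inE eq_sym bc.
have -> : T :\ c = b |: D.
  by apply/setP => x; rewrite /D !inE; case: (eqVneq x b) => [->|_] /=; rewrite ?bc ?bT.
rewrite !moebius_setU1 // -!moebiusB; apply: eq_moebius => K KD.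
have bK : b \notin K by apply: contra bD => /(fintype.subsetP KD).
have cK : c \notin K by apply: contra cD => /(fintype.subsetP KD).
by have := SE_look_swap SEo bc bK cK; lra.
Qed.

Lemma tau_at_moebius o (T : {set N}) a : SE_objective o -> a \in T ->
  tau_at o T = moebius (look o a) (T :\ a).
Proof.
move=> SEo aT; rewrite /tau_at; case: pickP => [b bT|]; last by move/(_ a); rewrite aT.
rewrite -(moebius_look_indep SEo bT aT) /moebius [RHS](bigD1 set0) ?sub0set //=.
by rewrite look_set0 mulr0 add0r; apply: eq_bigl => K; rewrite andbC.
Qed.

Lemma lookS_tau o a (L : {set N}) : SE_objective o -> a \notin L ->
  lookS (tau o) (a |: L) = moebius (look o a) L.
Proof.
move=> SEo aL; rewrite /lookS; case: insubP => [T _ vT|].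
  by rewrite ffunE vT (tau_at_moebius SEo (setU11 a L)) setU1K.
rewrite /SSP cardsU1 aL add1n ltnS card_gt0 negbK => /eqP->.
by rewrite moebius_set0 look_set0.
Qed.

Lemma inner_eta_tau o G : SE_objective o -> is_dag G ->
  inner o (eta G) = inner (tau o) (cG G).
Proof.
move=> SEo dG; rewrite inner_eta inner_cG //; apply: eq_bigr => a _.
rewrite -sum_moebius; apply: eq_bigr => L LP.
by rewrite lookS_tau // (notin_sub_pa dG LP).
Qed.

Definition lift_objective w : {ffun Ups N -> R} :=
  [ffun x : Ups N => \sum_(L : {set N} | L \subset (val x).2) lookS w ((val x).1 |: L)].

Lemma look_lift_objective w a (B : {set N}) : a \notin B ->
  look (lift_objective w) a B = \sum_(L : {set N} | L \subset B) lookS w (a |: L).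
Proof.
move=> aB; rewrite /look; case: insubP => [x _ vx|]; first by rewrite ffunE vx.
rewrite /upsP /= aB andbT negbK => /eqP->.
rewrite (eq_bigl (pred1 set0)) => [|L]; last by rewrite subset0.
by rewrite big_pred1_eq setU0 lookS_set1.
Qed.

Lemma inner_eta_lift w G : is_dag G ->
  inner (lift_objective w) (eta G) = inner w (cG G).
Proof.
move=> dG; rewrite inner_eta inner_cG //.
by apply: eq_bigr => a _; rewrite look_lift_objective // notin_pa.
Qed.

Lemma SE_lift_objective w : SE_objective (lift_objective w).
Proof. by move=> G H dG dH m; rewrite !inner_eta_lift // (cG_markov dG dH m). Qed.

End Imsets.

Section Correspondence.
Local Open Scope classical_set_scope.
Variables (N : finType) (R : realType).
Local Notation PN := (@PN N R).
Local Notation CN := (@CN N R).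
Implicit Types (o : {ffun Ups N -> R}) (w : {ffun SS N -> R}) (u : R).

Lemma valid_tau o u : SE_objective o -> valid PN o u -> valid CN (tau o) u.
Proof.
move=> SEo vo; apply: valid_vertices => G dG.
by rewrite -inner_eta_tau //; apply: valid_vertex vo dG.
Qed.

Lemma tau_face_subset o1 u1 o2 u2 :
  SE_objective o1 -> valid PN o1 u1 -> SE_objective o2 -> valid PN o2 u2 ->
  face_of PN o1 u1 `<=` face_of PN o2 u2 <->
  face_of CN (tau o1) u1 `<=` face_of CN (tau o2) u2.
Proof.
move=> s1 v1 s2 v2; have [t1 t2] := (valid_tau s1 v1, valid_tau s2 v2).
split=> [/(face_subset v1 v2) h|/(face_subset t1 t2) h].
  by apply/(face_subset t1 t2) => G dG; rewrite -!inner_eta_tau //; apply: h.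
by apply/(face_subset v1 v2) => G dG; rewrite !inner_eta_tau //; apply: h.
Qed.

(* The image of F is the face cut out on CN by the transform of any SE objective
   defining F; quantifying over all of them avoids choosing one. *)
Definition tau_image (F : set {ffun Ups N -> R}) : set {ffun SS N -> R} :=
  fun v => CN v /\ forall o u, SE_objective o -> valid PN o u ->
    F = face_of PN o u -> inner (tau o) v = u.

Lemma tau_image_face o u : SE_objective o -> valid PN o u ->
  tau_image (face_of PN o u) = face_of CN (tau o) u.
Proof.
move=> SEo vo; apply/seteqP; split => [v [Cv h]|v Fv]; first by split => //; apply: h.
split=> [|o' u' SEo' vo' eF]; first by case: Fv.
have /tau_face_subset sub : face_of PN o u `<=` face_of PN o' u' by rewrite eF.
by case: (sub SEo vo SEo' vo' v Fv).
Qed.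

Lemma tau_image_vertex F G : SE_face F -> is_dag G ->
  F (@Defs.eta N R G) <-> tau_image F (@cG N R G).
Proof.
move=> [o [u [SEo vo ->]]] dG; rewrite tau_image_face //.
by rewrite /face_of inner_eta_tau //; split=> -[_ e]; split=> //; apply: conv_dags_vertex.
Qed.

Lemma valid_lift w u : valid CN w u -> valid PN (lift_objective w) u.
Proof.
move=> vw; apply: valid_vertices => G dG.
by rewrite inner_eta_lift //; apply: valid_vertex vw dG.
Qed.

Lemma tau_lift w v : CN v -> inner (tau (lift_objective w)) v = inner w v.
Proof.
apply: eq_inner_conv => G dG.
by rewrite -inner_eta_tau ?inner_eta_lift //; apply: SE_lift_objective.
Qed.

Lemma tau_image_lift w u : valid CN w u ->
  tau_image (face_of PN (lift_objective w) u) = face_of CN w u.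
Proof.
move=> /valid_lift vw; rewrite tau_image_face //; last exact: SE_lift_objective.
by apply/seteqP; split=> v [Cv e]; split=> //; rewrite ?tau_lift // in e *.
Qed.

End Correspondence.

Unset Implicit Arguments.
Local Open Scope classical_set_scope.

Theorem corollary5 (R : realType) (N : finType) (hN : (1 < #|N|)%N) :
  exists Phi : set {ffun Ups N -> R} -> set {ffun SS N -> R},
  [/\ (forall F, SE_face F -> is_face (@CN N R) (Phi F)) /\
      (forall F1 F2, SE_face F1 -> SE_face F2 -> Phi F1 = Phi F2 -> F1 = F2),
      (forall Fb, is_face (@CN N R) Fb -> exists2 F, SE_face F & Phi F = Fb),
      (forall F1 F2, SE_face F1 -> SE_face F2 -> (F1 `<=` F2 <-> Phi F1 `<=` Phi F2)),
      (forall o u, SE_objective o -> valid (@PN N R) o u ->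
         valid (@CN N R) (tau o) u /\
         Phi (face_of (@PN N R) o u) = face_of (@CN N R) (tau o) u) &
      (forall F, SE_face F -> forall G : arrows N, is_dag G ->
         (F (@Defs.eta N R G) <-> Phi F (@cG N R G)))].
Proof.
exists (@tau_image N R); split.
- split=> [F [o [u [SEo vo ->]]]|F1 F2 [o1 [u1 [s1 v1 ->]]] [o2 [u2 [s2 v2 ->]]]].
    by rewrite tau_image_face //; exists (tau o), u; split=> //; apply: valid_tau.
  rewrite !tau_image_face // => e.
  by apply/seteqP; split; apply/tau_face_subset => //; rewrite e.
- move=> _ [w [u [vw ->]]]; exists (face_of (@PN N R) (lift_objective w) u).
    by exists (lift_objective w), u; split; [apply: SE_lift_objective | apply: valid_lift |].
  exact: tau_image_lift.
- move=> F1 F2 [o1 [u1 [s1 v1 ->]]] [o2 [u2 [s2 v2 ->]]].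
  by rewrite !tau_image_face //; apply: tau_face_subset.
- by move=> o u SEo vo; split; [apply: valid_tau | apply: tau_image_face].
- by move=> F SEF G; apply: tau_image_vertex.
Qed.
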